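(* Let $\nu\ge3$ be a square-free integer with $\nu\equiv2$ or $3\pmod 4$, and for $n\ge0$ let $P_n(t)=(t^2-\nu)^{\circ n}\in\mathbb{Z}[t]$ (so $P_0(t)=t$). For $n\ge1$ write $P_n(t)=R_n(t)t^4+D_nt^2+C_n$ with $R_n\in\mathbb{Z}[t]$ and $D_n,C_n\in\mathbb{Z}$. Let $p$ be an odd prime not dividing $\nu$ such that $p$ divides $C_n$ for some $n\ge1$, and let $n(p)$ be the least positive integer $n$ with $p\mid C_n$. Then for every $n\ge0$, the polynomial $\bar P_n^2\,\bar R_{n(p)}(\bar P_n)+\bar D_{n(p)}\in\mathbb{F}_p[t]$ is separable (has no repeated irreducible factor).
   Context: Bars denote reduction modulo $p$. *)

From HB Require Import structures.
From mathcomp Require Import all_boot all_order all_algebra all_field.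
Set Implicit Arguments. Unset Strict Implicit. Unset Printing Implicit Defensive.
Import Order.TTheory GRing.Theory Num.Theory.
Local Open Scope ring_scope.

Definition squarefree (n : nat) : Prop :=
  forall q : nat, prime q -> ~~ (q * q %| n)%N.

Definition Pn (nu : nat) (n : nat) : {poly int} :=
  iter n (fun q : {poly int} => q ^+ 2 - (nu%:Z)%:P) 'X.

(* P_n = R_n t^4 + D_n t^2 + C_n *)
Definition Rn (nu n : nat) : {poly int} := drop_poly 4 (Pn nu n).
Definition Dn (nu n : nat) : int := (Pn nu n)`_2.
Definition Cn (nu n : nat) : int := (Pn nu n)`_0.

Definition redp (p : nat) (q : {poly int}) : {poly 'F_p} :=
  map_poly (fun z : int => z%:~R : 'F_p) q.

From HB Require Import structures.
From mathcomp Require Import all_boot all_order all_algebra all_field.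
From mathcomp Require Import ring zify.
Set Implicit Arguments. Unset Strict Implicit. Unset Printing Implicit Defensive.
Import Order.TTheory GRing.Theory Num.Theory.
Local Open Scope ring_scope.

(* Work over an algebraic closure K of F_p, where P_k is the k-th iterate of
   f = t^2 - c. The orbit of the critical point 0 of f is periodic with exact
   period N = n(p), so P_N = R_N t^4 + D_N t^2 and P_(N+n) = P_n^2 G_n, where
   G_n is the polynomial of the statement. A double root x of G_n is a critical
   point of P_(N+n), hence (chain rule, char K <> 2) a root of some P_k with
   k < N + n. Then P_(N+n-k)(0) = P_(N+n)(x) = 0 forces N | N+n-k, so k <= n and
   P_n(x) = P_(n-k)(0) = 0, whence G_n(x) = D_N. Finally
   D_N = prod_(0<j<N) 2 P_j(0) is nonzero by minimality of N. *)

Section QuadraticIterates.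
Variables (R : comNzRingType) (c : R).

Definition quad_iter k : {poly R} := iter k (fun q => q ^+ 2 - c%:P) 'X.

Local Notation P := quad_iter.

Lemma quad_iter0 : P 0 = 'X. Proof. by []. Qed.

Lemma quad_iterS k : P k.+1 = P k ^+ 2 - c%:P. Proof. by []. Qed.

Lemma quad_iterD a b : P (a + b) = P a \Po P b.
Proof.
elim: a => [|a IH]; first by rewrite comp_polyX.
by rewrite addSn !quad_iterS IH comp_polyB comp_polyC !expr2 comp_polyM.
Qed.

Lemma horner_quad_iterD a b x : (P (a + b)).[x] = (P a).[(P b).[x]].
Proof. by rewrite quad_iterD horner_comp. Qed.

Lemma deriv_quad_iter k : (P k)^`() = \prod_(j < k) (P j *+ 2).
Proof.
elim: k => [|k IH]; first by rewrite derivX big_ord0.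
rewrite quad_iterS derivB derivC subr0 expr2 derivM IH big_ord_recr /=.
by rewrite mulr2n mulrDr mulrC.
Qed.

Lemma quad_iterS_even k : P k.+1 = (P k \Po ('X - c%:P)) \Po 'X^2.
Proof.
by rewrite -addn1 quad_iterD -comp_polyA comp_polyB comp_polyC comp_polyX.
Qed.

Lemma coef_quad_iter_odd k i : odd i -> (P k.+1)`_i = 0.
Proof.
by move=> i_odd; rewrite quad_iterS_even coef_comp_poly_Xn // dvdn2 i_odd.
Qed.

Lemma coef2_quad_iter k : (P k.+1)`_2 = \prod_(j < k) ((P j.+1).[0] *+ 2).
Proof.
(* The t^2-coefficient of Q(t^2) is Q'(0), and here Q'(0) = P_k'(-c). *)
rewrite quad_iterS_even coef_comp_poly_Xn //= -[_`_1]mulr1n -coef_deriv.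
rewrite -horner_coef0 deriv_comp derivB derivX derivC subr0 mulr1 horner_comp.
rewrite deriv_quad_iter horner_prod; apply: eq_bigr => j _.
rewrite hornerMn -quad_iterS -[j.+1]addn1 horner_quad_iterD quad_iterS.
by rewrite !hornerE expr0n sub0r.
Qed.

Lemma quad_iter_even4 k : (0 < k)%N -> (P k).[0] = 0 ->
  P k = drop_poly 4 (P k) * 'X^4 + ((P k)`_2)%:P * 'X^2.
Proof.
case: k => // k _ Pk0; rewrite -{1}(poly_take_drop 4 (P k.+1)) addrC.
congr (_ + _); apply/polyP => i; rewrite coef_take_poly coefCM coefXn.
case: i => [|[|[|[|i]]]] /=; rewrite ?mulr0 ?mulr1 //.
- by rewrite -horner_coef0 Pk0.
- exact: coef_quad_iter_odd.
- exact: coef_quad_iter_odd.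
Qed.

End QuadraticIterates.

Lemma map_quad_iter (R S : comNzRingType) (f : {rmorphism R -> S}) c k :
  map_poly f (quad_iter c k) = quad_iter (f c) k.
Proof.
elim: k => [|k IH]; first exact: map_polyX.
by rewrite !quad_iterS rmorphB rmorphXn /= IH map_polyC.
Qed.

Section PeriodicCriticalOrbit.
Variables (L : closedFieldType) (c : L) (N : nat).
Hypotheses (two_neq0 : 2%:R != 0 :> L) (N_gt0 : (0 < N)%N).
Hypothesis quad_iterN_root0 : (quad_iter c N).[0] = 0.
Hypothesis quad_iter_root0_min :
  forall m, (0 < m)%N -> (m < N)%N -> (quad_iter c m).[0] != 0.

Local Notation P := (quad_iter c).

Lemma quad_iter_root0E j : ((P j).[0] == 0) = (N %| j)%N.
Proof.
have P_mulN0 a : (P (a * N)).[0] = 0.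
  elim: a => [|a IH]; first by rewrite quad_iter0 hornerX.
  by rewrite mulSn horner_quad_iterD IH.
rewrite {1}(divn_eq j N) addnC horner_quad_iterD P_mulN0 /dvdn.
have [->|jN_gt0] := posnP (j %% N); first by rewrite quad_iter0 hornerX !eqxx.
by rewrite (negbTE (quad_iter_root0_min jN_gt0 (ltn_pmod j N_gt0))).
Qed.

Lemma quad_iter_root_shift k j x :
  (P k).[x] = 0 -> ((P (j + k)).[x] == 0) = (N %| j)%N.
Proof. by move=> Pkx0; rewrite horner_quad_iterD Pkx0 quad_iter_root0E. Qed.

Lemma coef2_quad_iterN_neq0 : (P N)`_2 != 0.
Proof.
rewrite -(prednK N_gt0) coef2_quad_iter; apply/prodf_neq0 => j _.
by rewrite -mulr_natr mulf_neq0 // quad_iter_root0_min // -ltn_predRL.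
Qed.

Definition quad_cofactor n :=
  P n ^+ 2 * (drop_poly 4 (P N) \Po P n) + ((P N)`_2)%:P.

Lemma quad_iter_addN n : P (N + n) = P n ^+ 2 * quad_cofactor n.
Proof.
rewrite quad_iterD {1}(quad_iter_even4 N_gt0 quad_iterN_root0) /quad_cofactor.
by rewrite comp_polyD !comp_polyM comp_polyC !comp_polyX; ring.
Qed.

Lemma separable_quad_cofactor n : separable_poly (quad_cofactor n).
Proof.
rewrite unlock; apply/Pdiv.ClosedField.coprimepP => x /rootP Gx0.
apply/eqP => G'x0.
have : ((P (N + n))^`()).[x] = 0.
  by rewrite quad_iter_addN derivM hornerD !hornerM Gx0 G'x0 !mulr0 addr0.
rewrite deriv_quad_iter horner_prod => /eqP /prodf_eq0 [k _].
rewrite hornerMn -mulr_natr mulf_eq0 (negbTE two_neq0) orbF => /eqP Pkx0.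
have lt_k : (k < N + n)%N := ltn_ord k.
have N_dvd : (N %| N + n - k)%N.
  rewrite -(quad_iter_root_shift _ Pkx0) subnK ?(ltnW lt_k) //.
  by rewrite quad_iter_addN hornerM Gx0 mulr0.
have le_kn : (k <= n)%N.
  have : (N <= N + n - k)%N by rewrite dvdn_leq ?subn_gt0.
  lia.
have Pnx0 : (P n).[x] = 0.
  apply/eqP; rewrite -(subnK le_kn) quad_iter_root_shift //.
  by rewrite -(dvdn_addr _ (dvdnn N)) addnBA.
move: Gx0 => /eqP; rewrite /quad_cofactor !hornerE Pnx0 expr0n mul0r add0r.
by rewrite (negbTE coef2_quad_iterN_neq0).
Qed.

End PeriodicCriticalOrbit.

Lemma map_drop_poly (R S : nzRingType) (f : {additive R -> S}) n p :
  map_poly f (drop_poly n p) = drop_poly n (map_poly f p).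
Proof. by apply/polyP => i; rewrite coef_map !coef_drop_poly coef_map. Qed.

Theorem lemma4p7 (nu : nat) (p : nat) (np : nat) :
  (3 <= nu)%N -> squarefree nu -> (nu %% 4 == 2)%N || (nu %% 4 == 3)%N ->
  prime p -> odd p -> ~~ (p %| nu)%N ->
  (0 < np)%N -> (p%:Z %| Cn nu np)%Z ->
  (forall m : nat, (0 < m)%N -> (m < np)%N -> ~~ (p%:Z %| Cn nu m)%Z) ->
  forall n : nat,
    separable_poly
      (redp p (Pn nu n) ^+ 2 * (redp p (Rn nu np) \Po redp p (Pn nu n))
       + ((Dn nu np)%:~R : 'F_p)%:P).
Proof.
move=> _ _ _ p_prime p_odd _ np_gt0 p_dvd_C p_ndvd_C n.
have [K [iota _]] := countable_algebraic_closure 'F_p.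
have charK : p \in [pchar K] := rmorph_pchar iota (pchar_Fp p_prime).
have two_neq0 : 2%:R != 0 :> K.
  rewrite -(dvdn_pcharf charK) dvdn_prime2 //.
  by apply: contraL p_odd => /eqP->.
set c : K := (nu%:Z)%:~R.
have PnE m : map_poly intr (Pn nu m) = quad_iter c m := map_quad_iter _ _ _.
have CnE m : (quad_iter c m).[0] = (Cn nu m)%:~R.
  by rewrite horner_coef0 -PnE coef_map.
have redpE q : map_poly iota (redp p q) = map_poly intr q.
  by rewrite -map_poly_comp; apply: eq_map_poly => z /=; rewrite rmorph_int.
rewrite -(separable_map iota) rmorphD rmorphM rmorphXn /= map_comp_poly.
rewrite map_polyC /= !redpE rmorph_int /Rn map_drop_poly /Dn -coef_map !PnE.
apply: separable_quad_cofactor => //.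
- by apply/eqP; rewrite CnE -(dvdz_pcharf charK).
- by move=> m m_gt0 lt_m; rewrite CnE -(dvdz_pcharf charK) p_ndvd_C.
Qed.
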